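(* Let $k\ge 2$ and let $((G_n,S_n))_{n\ge1}$ be a sequence in $\mathcal M_k$ converging to $(G,S)$. Let (P) be one of the properties: (NA) being non-amenable; (Fr) containing a non-abelian free subgroup; (La) being large. If $G_n$ has (P) for all sufficiently large $n$, then every finitely presented group admitting an epimorphism onto $G$ has (P).
   Context: $\mathcal M_k$ is the set of pairs $(G,S)$ with $S$ an ordered $k$-tuple of generators of $G$, identified with normal subgroups of the free group $F_k$ (kernels of the induced epimorphism $F_k\to G$), with the topology in which $N_n\to N$ iff for every finite $K\subset F_k$, $N_n\cap K=N\cap K$ for large $n$. A group is large if it has a finite-index subgroup admitting an epimorphism onto a non-abelian free group. *)

From Stdlib Require Import Reals List Arith Classical ClassicalEpsilon.
From Stdlib Require Fin.
Import ListNotations.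
Set Implicit Arguments.
Unset Strict Implicit.

Record Group := {
  carrier :> Type;
  gmul : carrier -> carrier -> carrier;
  gone : carrier;
  ginv : carrier -> carrier;
  gassoc : forall x y z, gmul x (gmul y z) = gmul (gmul x y) z;
  gmul1l : forall x, gmul gone x = x;
  ginvl : forall x, gmul (ginv x) x = gone
}.
Arguments gmul {g} _ _.
Arguments gone {g}.
Arguments ginv {g} _.

Definition is_hom (G H : Group) (f : G -> H) : Prop :=
  forall x y, f (gmul x y) = gmul (f x) (f y).

Definition surjective (A B : Type) (f : A -> B) : Prop := forall y, exists x, f x = y.

(* ---------- Words over an alphabet X (letter, true = inverse letter) ---------- *)
Definition word (X : Type) := list (X * bool).

Definition letter_val (G : Group) (X : Type) (f : X -> G) (l : X * bool) : G :=
  if snd l then ginv (f (fst l)) else f (fst l).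

Definition eval (G : Group) (X : Type) (f : X -> G) (w : word X) : G :=
  fold_right (fun l acc => gmul (@letter_val G X f l) acc) gone w.

Definition winv (X : Type) (w : word X) : word X :=
  rev (map (fun l => (fst l, negb (snd l))) w).

Definition cancel_pair (X : Type) (a b : X * bool) : Prop :=
  fst a = fst b /\ snd a <> snd b.

Fixpoint reduced (X : Type) (w : word X) : Prop :=
  match w with
  | a :: ((b :: _) as t) => ~ cancel_pair a b /\ reduced t
  | _ => True
  end.

Fixpoint reduce (X : Type) (w : word X) : word X :=
  match w with
  | [] => []
  | a :: t =>
      match reduce t with
      | [] => [a]
      | b :: t' =>
          if excluded_middle_informative (cancel_pair a b) then t' else a :: b :: t'
      end
  end.
(* The free group F(X) is modelled as the set of reduced words over X with
   product (u,v) |-> reduce (u ++ v). *)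

Definition generates (G : Group) (X : Type) (S : X -> G) : Prop :=
  forall g : G, exists w : word X, eval S w = g.

(* (G_n,S_n) -> (G,S) in M_k: for every finite K of elements of F_k
   (represented by words), eventually N_n ∩ K = N ∩ K, where N_n, N are the
   kernels of F_k -> G_n, F_k -> G. *)
Definition marked_converges (k : nat) (Gs : nat -> Group)
    (Ss : forall n, Fin.t k -> Gs n) (G : Group) (S : Fin.t k -> G) : Prop :=
  forall K : list (word (Fin.t k)), exists n0, forall n, n0 <= n ->
    forall w, In w K -> (eval (Ss n) w = gone <-> eval S w = gone).

(* words representing elements of the normal closure of R in F(X) *)
Inductive consequence (X : Type) (R : list (word X)) : word X -> Prop :=
  | cons_nil : consequence R []
  | cons_rel r : In r R -> consequence R r
  | cons_inv w : consequence R w -> consequence R (winv w)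
  | cons_app u v : consequence R u -> consequence R v -> consequence R (u ++ v)
  | cons_conj u w : consequence R w -> consequence R (u ++ w ++ winv u)
  | cons_ins u v a b : cancel_pair a b -> consequence R (u ++ v) ->
      consequence R (u ++ a :: b :: v)
  | cons_del u v a b : cancel_pair a b -> consequence R (u ++ a :: b :: v) ->
      consequence R (u ++ v).

Definition finitely_presented (G : Group) : Prop :=
  exists (m : nat) (s : Fin.t m -> G) (R : list (word (Fin.t m))),
    generates s /\ forall w, eval s w = gone <-> consequence R w.

Definition amenable (G : Group) : Prop :=
  exists m : (G -> Prop) -> R,
    (forall A, (0 <= m A)%R) /\
    m (fun _ => True) = 1%R /\
    (forall A B, (forall x, A x -> B x -> False) ->
       m (fun x => A x \/ B x) = (m A + m B)%R) /\
    (forall (g : G) A, m (fun x => A (gmul (ginv g) x)) = m A).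

Definition non_amenable (G : Group) : Prop := ~ amenable G.

(* G contains a non-abelian free subgroup: a family f : X -> G, |X| >= 2,
   freely generating a subgroup (F(X) -> G injective). *)
Definition has_free_nonabelian_subgroup (G : Group) : Prop :=
  exists (X : Type) (x1 x2 : X) (f : X -> G), x1 <> x2 /\
    forall w : word X, reduced w -> w <> [] -> eval f w <> gone.

Definition is_subgroup (G : Group) (H : G -> Prop) : Prop :=
  H gone /\ (forall x y, H x -> H y -> H (gmul x y)) /\ (forall x, H x -> H (ginv x)).

Definition finite_index (G : Group) (H : G -> Prop) : Prop :=
  exists reps : list G, forall x : G, exists g, In g reps /\ H (gmul (ginv g) x).

Definition large (G : Group) : Prop :=
  exists (H : G -> Prop) (X : Type) (x1 x2 : X) (phi : G -> word X),
    is_subgroup H /\ finite_index H /\ x1 <> x2 /\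
    (forall x, H x -> reduced (phi x)) /\
    (forall x y, H x -> H y -> phi (gmul x y) = reduce (phi x ++ phi y)) /\
    (forall w, reduced w -> exists x, H x /\ phi x = w).

Inductive GProp := NA | Fr | La.

Definition has_prop (p : GProp) (G : Group) : Prop :=
  match p with
  | NA => non_amenable G
  | Fr => has_free_nonabelian_subgroup G
  | La => large G
  end.

(* The relators of a finite presentation of Gam, and the words expressing the
   marked generators of G through the images of the generators of Gam, form a
   finite set of words vanishing in G.  By convergence of marked groups they
   vanish in G_n for large n, so the presentation defines an epimorphism
   Gam -> G_n.  Non-amenability, containing a non-abelian free subgroup and
   largeness all pass from a quotient to the group itself. *)

From Stdlib Require Import Arith List ClassicalEpsilon FunctionalExtensionality.
Import ListNotations.
Set Implicit Arguments.
Unset Strict Implicit.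

Lemma section_of_surjective (A B : Type) (f : A -> B) :
  surjective f -> exists g : B -> A, forall y, f (g y) = y.
Proof.
  intro hf.
  exists (fun y => proj1_sig (constructive_indefinite_description _ (hf y))).
  intro y. destruct constructive_indefinite_description as [x hx]. exact hx.
Qed.

Section GroupLaws.
Variable G : Group.

Lemma gmulV (x : G) : gmul x (ginv x) = gone.
Proof.
  set (y := gmul x (ginv x)).
  assert (yy : gmul y y = y).
  { unfold y. rewrite <- gassoc, (gassoc (ginv x) x), ginvl, gmul1l. reflexivity. }
  rewrite <- (gmul1l y), <- (ginvl y), <- gassoc, yy. reflexivity.
Qed.

Lemma gmul1r (x : G) : gmul x gone = x.
Proof. rewrite <- (ginvl x), gassoc, gmulV, gmul1l. reflexivity. Qed.

Lemma gmul_cancel_l (x y z : G) : gmul x y = gmul x z -> y = z.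
Proof.
  intro e. rewrite <- (gmul1l y), <- (gmul1l z), <- (ginvl x), <- !gassoc, e.
  reflexivity.
Qed.

Lemma ginv_unique (x y : G) : gmul x y = gone -> y = ginv x.
Proof. intro e. apply (gmul_cancel_l (x := x)). rewrite e, gmulV. reflexivity. Qed.

Lemma eq_of_gmulV (x y : G) : gmul x (ginv y) = gone -> x = y.
Proof.
  intro e. rewrite <- (gmul1r x), <- (ginvl y), gassoc, e, gmul1l. reflexivity.
Qed.

Lemma ginv1 : ginv (gone : G) = gone.
Proof. symmetry. apply ginv_unique, gmul1r. Qed.

Lemma ginvK (x : G) : ginv (ginv x) = x.
Proof. symmetry. apply ginv_unique, ginvl. Qed.

Lemma ginvM (x y : G) : ginv (gmul x y) = gmul (ginv y) (ginv x).
Proof.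
  symmetry. apply ginv_unique.
  rewrite gassoc, <- (gassoc x y), gmulV, gmul1r, gmulV. reflexivity.
Qed.

End GroupLaws.

Section Homomorphisms.
Variables (G H : Group) (h : G -> H).
Hypothesis hh : is_hom h.

Lemma hom_gone : h gone = gone.
Proof.
  apply (gmul_cancel_l (x := h gone)). rewrite <- hh, gmul1l, gmul1r. reflexivity.
Qed.

Lemma hom_ginv (x : G) : h (ginv x) = ginv (h x).
Proof. apply ginv_unique. rewrite <- hh, gmulV. exact hom_gone. Qed.

End Homomorphisms.

Section Evaluation.
Variables (G : Group) (X : Type).

Lemma eval_app (t : X -> G) (u v : word X) :
  eval t (u ++ v) = gmul (eval t u) (eval t v).
Proof.
  induction u as [|a u IH]; simpl.
  - rewrite gmul1l. reflexivity.
  - rewrite IH, gassoc. reflexivity.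
Qed.

Lemma eval_winv (t : X -> G) (w : word X) : eval t (winv w) = ginv (eval t w).
Proof.
  induction w as [|[x b] w IH]; unfold winv in *; simpl.
  - symmetry. apply ginv1.
  - rewrite eval_app, IH, ginvM. simpl. rewrite gmul1r. f_equal.
    unfold letter_val. destruct b; simpl; [symmetry; apply ginvK | reflexivity].
Qed.

Lemma eval_ext (t t' : X -> G) (w : word X) :
  (forall x, t x = t' x) -> eval t w = eval t' w.
Proof.
  intro e. induction w as [|[x b] w IH]; simpl; [reflexivity|].
  unfold letter_val. simpl. rewrite IH, e. reflexivity.
Qed.

Lemma eval_hom (H : Group) (h : G -> H) (t : X -> G) (w : word X) :
  is_hom h -> eval (fun x => h (t x)) w = h (eval t w).
Proof.
  intro hh. induction w as [|[x b] w IH]; simpl.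
  - symmetry. apply hom_gone; exact hh.
  - rewrite IH, hh. unfold letter_val. simpl.
    destruct b; [rewrite hom_ginv by exact hh|]; reflexivity.
Qed.

Lemma letter_val_cancel (t : X -> G) (a b : X * bool) :
  cancel_pair a b -> gmul (letter_val t a) (letter_val t b) = gone.
Proof.
  destruct a as [x bx], b as [y byy]. intros [e ne]. simpl in *. subst y.
  unfold letter_val; simpl.
  destruct bx, byy; try (exfalso; apply ne; reflexivity); [apply ginvl | apply gmulV].
Qed.

Lemma consequence_eval (t : X -> G) (R : list (word X)) (w : word X) :
  (forall r, In r R -> eval t r = gone) -> consequence R w -> eval t w = gone.
Proof.
  intros HR c. induction c as [| | w c IH | u v _ IHu _ IHv | u w _ IH
                              | u v a b ab _ IH | u v a b ab _ IH]; auto.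
  - rewrite eval_winv, IH. apply ginv1.
  - rewrite eval_app, IHu, IHv. apply gmul1r.
  - rewrite !eval_app, IH, gmul1l, eval_winv. apply gmulV.
  - rewrite eval_app in *. simpl.
    rewrite (gassoc (letter_val t a)), letter_val_cancel, gmul1l by exact ab. exact IH.
  - rewrite eval_app in *. simpl in IH.
    rewrite (gassoc (letter_val t a)), letter_val_cancel, gmul1l in IH by exact ab. exact IH.
Qed.

End Evaluation.

Definition subst (X Y : Type) (u : X -> word Y) (w : word X) : word Y :=
  flat_map (fun l : X * bool => if snd l then winv (u (fst l)) else u (fst l)) w.

Lemma eval_subst (G : Group) (X Y : Type) (t : Y -> G) (u : X -> word Y) (w : word X) :
  eval t (subst u w) = eval (fun x => eval t (u x)) w.
Proof.
  induction w as [|[x b] w IH]; unfold subst in *; simpl; [reflexivity|].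
  rewrite eval_app, IH. unfold letter_val. simpl.
  destruct b; [rewrite eval_winv|]; reflexivity.
Qed.

Lemma hom_surjective_of_generators (G H : Group) (X : Type) (psi : G -> H) (t : X -> H) :
  is_hom psi -> generates t -> (forall x, exists g, psi g = t x) -> surjective psi.
Proof.
  intros hpsi gen hit y.
  destruct (gen y) as [w <-].
  assert (sec : exists lift : X -> G, forall x, psi (lift x) = t x).
  { exists (fun x => proj1_sig (constructive_indefinite_description _ (hit x))).
    intro x. destruct constructive_indefinite_description as [g hg]. exact hg. }
  destruct sec as [lift hlift].
  exists (eval lift w). rewrite <- eval_hom by exact hpsi. apply eval_ext, hlift.
Qed.

Lemma presentation_hom (Gam H : Group) (m : nat) (s : Fin.t m -> Gam)
    (R : list (word (Fin.t m))) (t : Fin.t m -> H) :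
  generates s -> (forall w, eval s w = gone <-> consequence R w) ->
  (forall r, In r R -> eval t r = gone) ->
  exists psi : Gam -> H, is_hom psi /\ forall w, psi (eval s w) = eval t w.
Proof.
  intros gen pres HR.
  destruct (section_of_surjective gen) as [word_of hword].
  exists (fun g => eval t (word_of g)).
  assert (well_defined : forall w, eval t (word_of (eval s w)) = eval t w).
  { intro w. apply eq_of_gmulV. rewrite <- eval_winv, <- eval_app.
    apply (consequence_eval HR), pres.
    rewrite eval_app, eval_winv, hword. apply gmulV. }
  split; [|exact well_defined].
  intros x y. rewrite <- (hword x), <- (hword y), <- eval_app, !well_defined.
  apply eval_app.
Qed.

Fixpoint fin_enum (k : nat) : list (Fin.t k) :=
  match k with
  | 0 => []
  | S k' => Fin.F1 :: map Fin.FS (fin_enum k')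
  end.

Lemma fin_enum_complete (k : nat) (i : Fin.t k) : In i (fin_enum k).
Proof. induction i; simpl; [left; reflexivity | right; apply in_map; exact IHi]. Qed.

Lemma marked_converges_vanishing (k : nat) (Gs : nat -> Group)
    (Ss : forall n, Fin.t k -> Gs n) (G : Group) (S : Fin.t k -> G)
    (K : list (word (Fin.t k))) :
  marked_converges Ss S -> (forall w, In w K -> eval S w = gone) ->
  exists n0, forall n, n0 <= n -> forall w, In w K -> eval (Ss n) w = gone.
Proof.
  intros hconv hK. destruct (hconv K) as [n0 hn0].
  exists n0. intros n hn w hw. apply (hn0 n hn w hw), hK, hw.
Qed.

Section EventualEpimorphisms.
Variables (k : nat) (Gs : nat -> Group) (Ss : forall n, Fin.t k -> Gs n)
  (G : Group) (S : Fin.t k -> G).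
Hypotheses (hSs : forall n, generates (Ss n)) (hS : generates S)
  (hconv : marked_converges Ss S).

Lemma finitely_presented_maps_onto_approximants (Gam : Group) (f : Gam -> G) :
  finitely_presented Gam -> is_hom f -> surjective f ->
  exists n1, forall n, n1 <= n ->
    exists psi : Gam -> Gs n, is_hom psi /\ surjective psi.
Proof.
  intros [m [s [R [gen pres]]]] hf sf.
  destruct (section_of_surjective hS) as [Sword HSword].
  set (u := fun i => Sword (f (s i))).
  assert (hu : forall w, eval S (subst u w) = f (eval s w)).
  { intro w. rewrite eval_subst, <- eval_hom by exact hf.
    apply eval_ext. intro i. apply HSword. }
  assert (sfs : surjective (fun w => f (eval s w))).
  { intro y. destruct (sf y) as [g <-]. destruct (gen g) as [w <-]. exists w. reflexivity. }
  destruct (section_of_surjective sfs) as [v hv].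
  (* Vanishing of the second family in [Gs n] says that [Ss n j] is the image
     of the Gam-word [v (S j)]. *)
  set (K := map (subst u) R ++
            map (fun j => subst u (v (S j)) ++ [(j, true)]) (fin_enum k)).
  destruct (marked_converges_vanishing (K := K) hconv) as [n1 hn1].
  { intros w hw. apply in_app_or in hw as [hw | hw]; apply in_map_iff in hw as [x [<- hx]].
    - rewrite hu, (proj2 (pres x)) by (apply cons_rel, hx). apply hom_gone, hf.
    - rewrite eval_app, hu, hv. simpl. rewrite gmul1r. apply gmulV. }
  exists n1. intros n hn.
  set (t := fun i => eval (Ss n) (u i)).
  destruct (@presentation_hom Gam (Gs n) m s R t gen pres) as [psi [hpsi hpsi_s]].
  { intros r hr. unfold t. rewrite <- eval_subst.
    apply (hn1 n hn), in_or_app. left. apply in_map, hr. }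
  exists psi. split; [exact hpsi|].
  apply (hom_surjective_of_generators hpsi (t := Ss n)); [apply hSs|]. intro j.
  exists (eval s (v (S j))). rewrite hpsi_s. apply eq_of_gmulV.
  unfold t. rewrite <- eval_subst.
  replace (ginv (Ss n j)) with (eval (Ss n) [(j, true)]) by apply gmul1r.
  rewrite <- eval_app. apply (hn1 n hn), in_or_app. right.
  apply (in_map (fun j => subst u (v (S j)) ++ [(j, true)])), fin_enum_complete.
Qed.

End EventualEpimorphisms.

Section PullBack.
Variables (Gam H : Group) (psi : Gam -> H).
Hypotheses (hpsi : is_hom psi) (spsi : surjective psi).

(* A mean on Gam pushes forward to a mean on H. *)
Lemma non_amenable_of_epi : non_amenable H -> non_amenable Gam.
Proof.
  intros hna [mu [mu_ge0 [mu_T [mu_add mu_inv]]]]. apply hna.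
  destruct (section_of_surjective spsi) as [lift hlift].
  exists (fun A => mu (fun x => A (psi x))). repeat split.
  - intro A. apply mu_ge0.
  - exact mu_T.
  - intros A B disj. apply mu_add. intro x. apply disj.
  - intros g A. rewrite <- (mu_inv (lift g) (fun x => A (psi x))). f_equal.
    apply functional_extensionality. intro x.
    rewrite hpsi, hom_ginv, hlift by exact hpsi. reflexivity.
Qed.

Lemma free_subgroup_of_epi :
  has_free_nonabelian_subgroup H -> has_free_nonabelian_subgroup Gam.
Proof.
  intros [X [x1 [x2 [b [ne free]]]]].
  destruct (section_of_surjective spsi) as [lift hlift].
  exists X, x1, x2, (fun x => lift (b x)). split; [exact ne|].
  intros w red nonempty e. apply (free w red nonempty).
  rewrite (eval_ext (t' := fun x => psi (lift (b x)))) by (intro x; rewrite hlift; reflexivity).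
  rewrite eval_hom, e by exact hpsi. apply hom_gone, hpsi.
Qed.

Lemma large_of_epi : large H -> large Gam.
Proof.
  intros [L [X [x1 [x2 [phi [[L1 [LM LV]] [[reps cover] [ne [red [phiM phi_onto]]]]]]]]]].
  destruct (section_of_surjective spsi) as [lift hlift].
  exists (fun x => L (psi x)), X, x1, x2, (fun x => phi (psi x)).
  repeat split; auto.
  - rewrite hom_gone by exact hpsi. exact L1.
  - intros x y Lx Ly. rewrite hpsi. auto.
  - intros x Lx. rewrite hom_ginv by exact hpsi. auto.
  - exists (map lift reps). intro x. destruct (cover (psi x)) as [g [hg Lg]].
    exists (lift g). split; [apply in_map, hg|].
    rewrite hpsi, hom_ginv, hlift by exact hpsi. exact Lg.
  - intros x y Lx Ly. rewrite hpsi. auto.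
  - intros w hw. destruct (phi_onto w hw) as [y [Ly <-]].
    exists (lift y). rewrite hlift. auto.
Qed.

Lemma has_prop_of_epi (p : GProp) : has_prop p H -> has_prop p Gam.
Proof.
  destruct p; simpl.
  - apply non_amenable_of_epi.
  - apply free_subgroup_of_epi.
  - apply large_of_epi.
Qed.

End PullBack.

Theorem mainTheorem6 (p : GProp) (k : nat) (hk : 2 <= k)
    (Gs : nat -> Group) (Ss : forall n, Fin.t k -> Gs n)
    (G : Group) (S : Fin.t k -> G)
    (hSs : forall n, generates (Ss n)) (hS : generates S)
    (hconv : @marked_converges k Gs Ss G S)
    (hP : exists n0, forall n, n0 <= n -> has_prop p (Gs n)) :
  forall (Gam : Group) (f : Gam -> G),
    finitely_presented Gam -> is_hom f -> surjective f -> has_prop p Gam.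
Proof.
  intros Gam f fp hf sf.
  destruct hP as [n0 hn0].
  destruct (finitely_presented_maps_onto_approximants hSs hS hconv fp hf sf)
    as [n1 hn1].
  destruct (hn1 (max n0 n1) (Nat.le_max_r n0 n1)) as [psi [hpsi spsi]].
  apply (has_prop_of_epi hpsi spsi), hn0, Nat.le_max_l.
Qed.
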